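(* Let $A,B\in\mathbb{N}$ with $A\ge B$ and let $p\in[0,1]$. For $i\in\{1,\dots,B\}$ let $X_i\sim\mathrm{Bin}(A-i,p)$. Then $i\mapsto \mathbb{P}(X_i\ge B-i)$ is a (non-strictly) increasing function on $\{1,\dots,B\}$.
   Context: $\mathrm{Bin}(n,p)$ denotes the binomial distribution with $n$ trials and success probability $p$. *)

From HB Require Import structures.
From mathcomp Require Import all_boot all_order all_algebra.
From mathcomp Require Import all_classical all_reals all_analysis.
Set Implicit Arguments. Unset Strict Implicit. Unset Printing Implicit Defensive.

(* Condition on the last of n + 1 trials: P(Bin(n+1,p) >= m+1) equals
   p P(Bin(n,p) >= m) + (1-p) P(Bin(n,p) >= m+1), a convex combination of two
   numbers bounded by P(Bin(n,p) >= m).  Hence removing one trial and lowering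
   the threshold by one never decreases the tail, which is exactly the step
   from i to i + 1. *)
From HB Require Import structures.
From mathcomp Require Import all_boot all_order all_algebra.
From mathcomp Require Import all_classical all_reals all_analysis.
From mathcomp Require Import ring.
Import Order.TTheory GRing.Theory Num.Theory.
Local Open Scope classical_set_scope.
Local Open Scope ring_scope.

Section binomial_tail.
Variables (R : realType) (p : R).

Lemma binomial_pmf_small n k : (n < k)%N -> binomial_pmf n p k = 0.
Proof. by move=> nk; rewrite /binomial_pmf bin_small // mulr0n. Qed.

Lemma binomial_pmfS n k :
  binomial_pmf n.+1 p k.+1 = p * binomial_pmf n p k + (1 - p) * binomial_pmf n p k.+1.
Proof.
rewrite /binomial_pmf binS mulrnDr addrC; congr (_ + _).
  have [kn|nk] := leqP k n; last by rewrite bin_small // !mulr0n mulr0.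
  by rewrite subSS exprS -!mulrnAr mulrA.
have [kn|nk] := ltnP k n; last by rewrite bin_small ?ltnS // !mulr0n mulr0.
rewrite subSS -(subnSK kn) exprS mulrnAr; congr (_ *+ _).
by rewrite /unstable.onem exprS; ring.
Qed.

Definition binomial_tail n m : R := \sum_(m <= k < n.+1) binomial_pmf n p k.

Lemma binomial_tail_widen n m N : (n < N)%N ->
  binomial_tail n m = \sum_(m <= k < N) binomial_pmf n p k.
Proof.
move=> nN; rewrite /binomial_tail (big_nat_widen _ _ _ _ _ nN) big_mkcond /=.
apply: eq_bigr => k _; case: ltnP => // nk.
by rewrite binomial_pmf_small.
Qed.

Lemma binomial_tailSS n m :
  binomial_tail n.+1 m.+1 = p * binomial_tail n m + (1 - p) * binomial_tail n m.+1.
Proof.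
rewrite /binomial_tail big_add1 /=.
under eq_bigr do rewrite binomial_pmfS.
rewrite big_split /= -!mulr_sumr; congr (_ + _ * _).
by rewrite -/(binomial_tail n m.+1) (@binomial_tail_widen n m.+1 n.+2) ?big_add1.
Qed.

Hypotheses (p0 : 0 <= p) (p1 : p <= 1).

Lemma binomial_tail_geqE n m :
  binomial_prob n p [set k : nat | (m <= k)%N] = (binomial_tail n m)%:E.
Proof.
rewrite (binomial_probE _ (p0:=p0) p1) sumEFin /binomial_tail big_geq_mkord.
congr _%:E; rewrite [RHS]big_mkcond; apply: eq_bigr => k _; rewrite indicE.
have [mk|mk] := boolP (m <= k)%N; first by rewrite mem_set // mulr1.
by rewrite memNset ?mulr0 //; apply/negP.
Qed.

Lemma binomial_tail_ge0 n m : 0 <= binomial_tail n m.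
Proof. by apply: sumr_ge0 => k _; apply: binomial_pmf_ge0; rewrite p0 p1. Qed.

Lemma binomial_tailS_le n m : binomial_tail n m.+1 <= binomial_tail n m.
Proof.
have [mn|nm] := ltnP m n.+1; last first.
  by rewrite {1}/binomial_tail big_geq ?binomial_tail_ge0 // ltnW.
rewrite [leRHS]/binomial_tail big_ltn // lerDr.
by apply: binomial_pmf_ge0; rewrite p0 p1.
Qed.

Lemma binomial_tailSS_le n m : binomial_tail n.+1 m.+1 <= binomial_tail n m.
Proof.
rewrite binomial_tailSS.
apply: (@le_trans _ _ (p * binomial_tail n m + (1 - p) * binomial_tail n m)).
  by rewrite lerD2l ler_wpM2l ?subr_ge0 ?binomial_tailS_le.
by rewrite -mulrDl addrC subrK mul1r.
Qed.

Lemma binomial_tailDD_le n m d : binomial_tail (n + d) (m + d) <= binomial_tail n m.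
Proof.
elim: d => [|d IHd]; first by rewrite !addn0.
by rewrite !addnS; apply: le_trans IHd; apply: binomial_tailSS_le.
Qed.

End binomial_tail.

Theorem lemma7 (R : realType) (A B : nat) (p : R) :
  (B <= A)%N -> 0 <= p <= 1 ->
  forall i j : nat, (1 <= i)%N -> (i <= j)%N -> (j <= B)%N ->
    (binomial_prob (A - i) p [set k : nat | (B - i <= k)%N]
     <= binomial_prob (A - j) p [set k : nat | (B - j <= k)%N])%E.
Proof.
move=> BA /andP[p0 p1] i j _ ij jB.
rewrite !binomial_tail_geqE // lee_fin.
have splitC C : (j <= C)%N -> (C - i = C - j + (j - i))%N.
  by move=> jC; rewrite addnBA // subnK.
rewrite (splitC A (leq_trans jB BA)) (splitC B jB).
exact: binomial_tailDD_le.
Qed.
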